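(* Let $k$ be a positive integer and $f\in\mathcal R^0_{[1]}(\mathbb R^2)$. Then for every integer $m\ge 2k$, the function $f^m$ is $k$-flat.
   Context: For $k\in\mathbb N\cup\{\infty\}$, $\mathcal R^k(\mathbb R^2)$ denotes the ring of functions $f:\mathbb R^2\to\mathbb R$ of class $C^k$ that coincide with $p/q$ ($p,q$ polynomials, $q$ nonvanishing there) on some nonempty Zariski open set. For $l\in\mathbb N$: consider compositions $\pi:M\to\mathbb R^2$ of successive blowings-up $M_i\to M_{i-1}$ ($M_0=\mathbb R^2$), each centred at points. An infinitely near point of order $j$ is a sequence $a_0\in M_0,\dots,a_j\in M_j$ where $M_i$ is the blowing-up of $M_{i-1}$ at $a_{i-1}$ and $a_i$ maps to $a_{i-1}$; the number of stages of $\pi$ is the maximal order of infinitely near points in $M$. $\mathcal R^k_{[l]}(\mathbb R^2)$ is the set of $f\in\mathcal R^k(\mathbb R^2)$ for which there is such a $\pi$ with at most $l$ stages such that $f\circ\pi$ is regular on $M$. A function $g:\mathbb R^2\to\mathbb R$ is $k$-flat at a point $a$ if $g$ is of class $C^k$ at $a$ and all partial derivatives of $g$ of order $\le k$ vanish at $a$; $g$ is $k$-flat if it is $k$-flat at every point of its zero set. *)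

From Stdlib Require Export Reals List.
Open Scope R_scope.

Inductive pexpr : Type :=
| PC : R -> pexpr
| PX : pexpr
| PY : pexpr
| PAdd : pexpr -> pexpr -> pexpr
| PMul : pexpr -> pexpr -> pexpr.

Fixpoint peval (e : pexpr) (x y : R) : R :=
  match e with
  | PC c => c
  | PX => x
  | PY => y
  | PAdd a b => peval a x y + peval b x y
  | PMul a b => peval a x y * peval b x y
  end.

(** Every Zariski open subset of R^2 is of the form {h <> 0}. *)

Definition regular_at (g : R -> R -> R) (x0 y0 : R) : Prop :=
  exists p q h : pexpr,
    peval h x0 y0 <> 0 /\
    forall x y, peval h x y <> 0 ->
      peval q x y <> 0 /\ g x y = peval p x y / peval q x y.

Definition cont_at (g : R -> R -> R) (x0 y0 : R) : Prop :=
  forall eps, 0 < eps -> exists delta, 0 < delta /\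
    forall x y, Rabs (x - x0) < delta -> Rabs (y - y0) < delta ->
      Rabs (g x y - g x0 y0) < eps.

Definition cont_on (U : R -> R -> Prop) (g : R -> R -> R) : Prop :=
  forall x y, U x y -> cont_at g x y.

Definition open2 (U : R -> R -> Prop) : Prop :=
  forall x y, U x y -> exists r, 0 < r /\
    forall x' y', Rabs (x' - x) < r -> Rabs (y' - y) < r -> U x' y'.

Definition R0 (f : R -> R -> R) : Prop :=
  (forall x y, cont_at f x y) /\
  exists p q h : pexpr,
    (exists x y, peval h x y <> 0) /\
    forall x y, peval h x y <> 0 ->
      peval q x y <> 0 /\ f x y = peval p x y / peval q x y.

(** f ∘ π is regular on M, where π : M -> R^2 is the blowing-up of R^2 at
    the finitely many (distinct) points of S (a one-stage composition of
    point blowings-up).  Regularity is checked on the standard affine charts: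
    away from S, M = R^2; over a center a = (a1,a2) the two charts are
    (s,t) |-> (a1 + s, a2 + s t) and (u,v) |-> (a1 + u v, a2 + v), whose
    exceptional divisor is {s = 0}, resp. {v = 0}. *)
Definition regular_after_blowup (f : R -> R -> R) (S : list (R * R)) : Prop :=
  (forall x y, ~ In (x, y) S -> regular_at f x y) /\
  (forall a1 a2, In (a1, a2) S ->
     (forall t, regular_at (fun s t => f (a1 + s) (a2 + s * t)) 0 t) /\
     (forall u, regular_at (fun u v => f (a1 + u * v) (a2 + v)) u 0)).

(** R^0_[1](R^2). The empty list gives π = id (0 stages). *)
Definition R0_1 (f : R -> R -> R) : Prop :=
  R0 f /\ exists S : list (R * R), regular_after_blowup f S.

Fixpoint Ck_on (k : nat) (U : R -> R -> Prop) (g : R -> R -> R) : Prop :=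
  cont_on U g /\
  match k with
  | O => True
  | S k' => exists gx gy : R -> R -> R,
      (forall x y, U x y ->
         derivable_pt_lim (fun t => g t y) x (gx x y) /\
         derivable_pt_lim (fun t => g x t) y (gy x y)) /\
      Ck_on k' U gx /\ Ck_on k' U gy
  end.

Inductive dir : Type := Dx | Dy.

(** is_pderiv U w g h : h is the iterated partial derivative of g on U
    along the word of directions w (applied left to right). *)
Inductive is_pderiv (U : R -> R -> Prop) :
  list dir -> (R -> R -> R) -> (R -> R -> R) -> Prop :=
| pd_nil : forall g, is_pderiv U nil g g
| pd_x : forall w g g' h,
    (forall x y, U x y -> derivable_pt_lim (fun t => g t y) x (g' x y)) ->
    is_pderiv U w g' h -> is_pderiv U (Dx :: w) g h
| pd_y : forall w g g' h,
    (forall x y, U x y -> derivable_pt_lim (fun t => g x t) y (g' x y)) ->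
    is_pderiv U w g' h -> is_pderiv U (Dy :: w) g h.

Definition kflat_at (k : nat) (g : R -> R -> R) (x0 y0 : R) : Prop :=
  exists U : R -> R -> Prop,
    open2 U /\ U x0 y0 /\ Ck_on k U g /\
    forall (w : list dir) (h : R -> R -> R),
      (length w <= k)%nat -> is_pderiv U w g h -> h x0 y0 = 0.

Definition kflat (k : nat) (g : R -> R -> R) : Prop :=
  forall x y, g x y = 0 -> kflat_at k g x y.

From Pilot Require Import Defs.
From Stdlib Require Import Reals List Lra Lia Classical ClassicalEpsilon.
From Coquelicot Require Import Coquelicot.
Open Scope R_scope.

(* Let a be a zero of f.  In the chart (s, t) |-> (a1 + s, a2 + s t) of the blowing-up at a,
   f is regular and vanishes on the exceptional divisor {s = 0}, so it equals s G(s, t) with G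
   regular; the same holds in the other chart.  Hence f^m = s^m G^m: f^m "vanishes to order m"
   along the exceptional divisor.  Differentiating x |-> (x - a1)^m G(x - a1, (y - a2)/(x - a1))
   shows that the partial derivatives vanish to order m - 1.  Compactness of the slopes
   t in [-1, 1] turns order n into the estimate |g(p)| <= M |p - a|^n, so a function vanishing
   to order n >= 1 is continuous at a and, if n >= 2, has zero partials at a.  Away from a the
   function is regular, hence smooth.  Induction on k gives C^k and vanishing of all partial
   derivatives of order <= k at a as soon as k < m, in particular for m >= 2k. *)

Fixpoint pexpr_dx (e : pexpr) : pexpr :=
  match e with
  | PC _ | PY => PC 0
  | PX => PC 1
  | PAdd a b => PAdd (pexpr_dx a) (pexpr_dx b)
  | PMul a b => PAdd (PMul (pexpr_dx a) b) (PMul a (pexpr_dx b))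
  end.

Fixpoint pexpr_dy (e : pexpr) : pexpr :=
  match e with
  | PC _ | PX => PC 0
  | PY => PC 1
  | PAdd a b => PAdd (pexpr_dy a) (pexpr_dy b)
  | PMul a b => PAdd (PMul (pexpr_dy a) b) (PMul a (pexpr_dy b))
  end.

Fixpoint pexpr_subst (e u v : pexpr) : pexpr :=
  match e with
  | PC c => PC c
  | PX => u
  | PY => v
  | PAdd a b => PAdd (pexpr_subst a u v) (pexpr_subst b u v)
  | PMul a b => PMul (pexpr_subst a u v) (pexpr_subst b u v)
  end.

(* The polynomial (e(s,t) - e(0,t)) / s. *)
Fixpoint pexpr_divx (e : pexpr) : pexpr :=
  match e with
  | PC _ | PY => PC 0
  | PX => PC 1
  | PAdd a b => PAdd (pexpr_divx a) (pexpr_divx b)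
  | PMul a b => PAdd (PMul (pexpr_divx a) b) (PMul (pexpr_subst a (PC 0) PY) (pexpr_divx b))
  end.

Lemma peval_subst e u v x y :
  peval (pexpr_subst e u v) x y = peval e (peval u x y) (peval v x y).
Proof. induction e; simpl; try rewrite IHe1, IHe2; reflexivity. Qed.

Lemma peval_divx e s t : peval e s t = peval e 0 t + s * peval (pexpr_divx e) s t.
Proof.
  induction e; simpl; try ring.
  - rewrite IHe1 at 1; rewrite IHe2 at 1; ring.
  - rewrite peval_subst; simpl.
    rewrite IHe1 at 1.
    replace (peval e2 0 t) with (peval e2 s t - s * peval (pexpr_divx e2) s t)
      by (rewrite IHe2 at 1; ring).
    ring.
Qed.

Lemma is_derive_eq_val (f : R -> R) (x l l' : R) : is_derive f x l -> l = l' -> is_derive f x l'.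
Proof. now intros H <-. Qed.

Lemma is_derive_cst (c x : R) : is_derive (fun _ : R => c) x 0.
Proof. apply (is_derive_const (K := R_AbsRing) c). Qed.

Lemma is_derive_identity (x : R) : is_derive (fun t : R => t) x 1.
Proof. apply (is_derive_id (K := R_AbsRing)). Qed.

Lemma is_derive_peval e (u v : R -> R) (t u' v' : R) :
  is_derive u t u' -> is_derive v t v' ->
  is_derive (fun r => peval e (u r) (v r)) t
    (peval (pexpr_dx e) (u t) (v t) * u' + peval (pexpr_dy e) (u t) (v t) * v').
Proof.
  intros Hu Hv; induction e; simpl.
  - apply (is_derive_eq_val _ _ _ _ (is_derive_cst r t)); ring.
  - apply (is_derive_eq_val _ _ _ _ Hu); ring.
  - apply (is_derive_eq_val _ _ _ _ Hv); ring.
  - apply (is_derive_eq_val _ _ _ _ (is_derive_plus _ _ _ _ _ IHe1 IHe2)).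
    unfold plus; simpl; ring.
  - apply (is_derive_eq_val _ _ _ _ (is_derive_mult _ _ _ _ _ IHe1 IHe2 Rmult_comm)).
    unfold plus, mult; simpl; ring.
Qed.

Lemma peval_continuous e x y :
  continuous (fun z : R * R => peval e (fst z) (snd z)) (x, y).
Proof.
  induction e; simpl.
  - apply continuous_const.
  - apply continuous_fst.
  - apply continuous_snd.
  - apply (continuous_plus (fun z : R * R => peval e1 (fst z) (snd z))); assumption.
  - apply (continuous_mult (fun z : R * R => peval e1 (fst z) (snd z))); assumption.
Qed.

Lemma cont_at_of_continuous (g : R -> R -> R) x y :
  continuous (fun z : R * R => g (fst z) (snd z)) (x, y) -> cont_at g x y.
Proof.
  intros H eps Heps.
  assert (Hnear : locally (g x y) (fun r => Rabs (r - g x y) < eps))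
    by now exists (mkposreal eps Heps).
  destruct (H _ Hnear) as [d Hd].
  exists d; split; [apply cond_pos |].
  intros x' y' Hx Hy; apply (Hd (x', y')); split; assumption.
Qed.

Lemma peval_nonzero_near h x y : peval h x y <> 0 -> exists r, 0 < r /\
  forall x' y', Rabs (x' - x) < r -> Rabs (y' - y) < r -> peval h x' y' <> 0.
Proof.
  intros Hh.
  destruct (cont_at_of_continuous _ _ _ (peval_continuous h x y) (Rabs (peval h x y)))
    as [d [Hd H]]; [now apply Rabs_pos_lt |].
  exists d; split; [exact Hd |].
  intros x' y' Hx Hy E; specialize (H x' y' Hx Hy).
  rewrite E, Rminus_0_l, Rabs_Ropp in H; lra.
Qed.

Lemma locally_abs_lt (c : R -> R) (x0 t d : R) :
  continuous c x0 -> Rabs (c x0 - t) < d -> locally x0 (fun x => Rabs (c x - t) < d).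
Proof.
  intros Hc Hd.
  assert (Hnear : locally (c x0) (fun r => Rabs (r - c x0) < d - Rabs (c x0 - t))).
  { exists (mkposreal (d - Rabs (c x0 - t)) ltac:(lra)); now intros r Hr. }
  apply (filter_imp (fun x => Rabs (c x - c x0) < d - Rabs (c x0 - t))); [intros x Hx | exact (Hc _ Hnear)].
  replace (c x - t) with ((c x - c x0) + (c x0 - t)) by ring.
  generalize (Rabs_triang (c x - c x0) (c x0 - t)); lra.
Qed.

Definition quotient_on (h p q : pexpr) (g : R -> R -> R) : Prop :=
  forall x y, peval h x y <> 0 ->
    peval q x y <> 0 /\ g x y = peval p x y / peval q x y.

Lemma regular_at_ext g1 g2 x y :
  (forall a b, g1 a b = g2 a b) -> regular_at g1 x y -> regular_at g2 x y.
Proof.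
  intros E [p [q [h [Hh W]]]]; exists p, q, h; split; [exact Hh |].
  intros a b Hab; rewrite <- E; now apply W.
Qed.

Lemma regular_at_peval e x y : regular_at (peval e) x y.
Proof. exists e, (PC 1), (PC 1); simpl; split; [lra |]; intros; split; [lra | field]. Qed.

Lemma peval_mul_neq0 h1 h2 x y :
  peval (PMul h1 h2) x y <> 0 -> peval h1 x y <> 0 /\ peval h2 x y <> 0.
Proof. simpl; intros H; split; intros E; apply H; rewrite E; ring. Qed.

Lemma regular_at_plus g1 g2 x y : regular_at g1 x y -> regular_at g2 x y ->
  regular_at (fun a b => g1 a b + g2 a b) x y.
Proof.
  intros [p1 [q1 [h1 [H1 W1]]]] [p2 [q2 [h2 [H2 W2]]]].
  exists (PAdd (PMul p1 q2) (PMul p2 q1)), (PMul q1 q2), (PMul h1 h2); simpl.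
  split; [now apply Rmult_integral_contrapositive |].
  intros a b [A1 A2]%peval_mul_neq0.
  destruct (W1 _ _ A1) as [Q1 ->], (W2 _ _ A2) as [Q2 ->].
  split; [now apply Rmult_integral_contrapositive | now field].
Qed.

Lemma regular_at_mult g1 g2 x y : regular_at g1 x y -> regular_at g2 x y ->
  regular_at (fun a b => g1 a b * g2 a b) x y.
Proof.
  intros [p1 [q1 [h1 [H1 W1]]]] [p2 [q2 [h2 [H2 W2]]]].
  exists (PMul p1 p2), (PMul q1 q2), (PMul h1 h2); simpl.
  split; [now apply Rmult_integral_contrapositive |].
  intros a b [A1 A2]%peval_mul_neq0.
  destruct (W1 _ _ A1) as [Q1 ->], (W2 _ _ A2) as [Q2 ->].
  split; [now apply Rmult_integral_contrapositive | now field].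
Qed.

Lemma regular_at_pow g n x y : regular_at g x y -> regular_at (fun a b => g a b ^ n) x y.
Proof.
  intros Hg; induction n as [| n IH]; simpl.
  - exact (regular_at_peval (PC 1) x y).
  - exact (regular_at_mult _ _ _ _ Hg IH).
Qed.

Lemma regular_at_subst g p q h u v x y :
  peval h (peval u x y) (peval v x y) <> 0 -> quotient_on h p q g ->
  regular_at (fun a b => g (peval u a b) (peval v a b)) x y.
Proof.
  intros Hh W.
  exists (pexpr_subst p u v), (pexpr_subst q u v), (pexpr_subst h u v).
  rewrite peval_subst; split; [exact Hh |].
  intros a b Hab; rewrite !peval_subst in *; now apply W.
Qed.

Lemma regular_at_swap g x y : regular_at g x y -> regular_at (fun a b => g b a) y x.
Proof. intros [p [q [h [Hh W]]]]; exact (regular_at_subst g p q h PY PX y x Hh W). Qed.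

Lemma cont_at_near_ext (g g' : R -> R -> R) x y r : 0 < r ->
  (forall a b, Rabs (a - x) < r -> Rabs (b - y) < r -> g a b = g' a b) ->
  cont_at g' x y -> cont_at g x y.
Proof.
  intros Hr E H eps He; destruct (H eps He) as [d [Hd Hd']].
  exists (Rmin d r); split; [now apply Rmin_pos |].
  intros a b Ha Hb.
  assert (Hx0 : Rabs (x - x) < r) by (rewrite Rminus_diag, Rabs_R0; exact Hr).
  assert (Hy0 : Rabs (y - y) < r) by (rewrite Rminus_diag, Rabs_R0; exact Hr).
  pose proof (Rmin_l d r); pose proof (Rmin_r d r).
  rewrite !E by lra; apply Hd'; lra.
Qed.

Lemma regular_at_cont g x y : regular_at g x y -> cont_at g x y.
Proof.
  intros [p [q [h [Hh W]]]].
  destruct (peval_nonzero_near h x y Hh) as [r [Hr Hnear]].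
  apply (cont_at_near_ext g (fun a b => peval p a b / peval q a b) x y r Hr).
  { intros a b Ha Hb; apply W, Hnear; assumption. }
  apply cont_at_of_continuous; unfold Rdiv.
  apply (continuous_mult (fun z : R * R => peval p (fst z) (snd z))
           (fun z : R * R => / peval q (fst z) (snd z))); [apply peval_continuous |].
  apply (continuous_comp (fun z : R * R => peval q (fst z) (snd z)) Rinv).
  - apply peval_continuous.
  - apply continuous_Rinv, W, Hh.
Qed.

Lemma regular_at_bounded g x y : regular_at g x y -> exists d M, 0 < d /\
  forall a b, Rabs (a - x) < d -> Rabs (b - y) < d -> Rabs (g a b) <= M.
Proof.
  intros H; destruct (regular_at_cont g x y H 1 Rlt_0_1) as [d [Hd Hc]].
  exists d, (Rabs (g x y) + 1); split; [exact Hd |].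
  intros a b Ha Hb; specialize (Hc a b Ha Hb).
  replace (g a b) with ((g a b - g x y) + g x y) by ring.
  generalize (Rabs_triang (g a b - g x y) (g x y)); lra.
Qed.

Definition partial_x (g : R -> R -> R) : R -> R -> R := fun x y => Derive (fun t => g t y) x.
Definition partial_y (g : R -> R -> R) : R -> R -> R := fun x y => Derive (fun t => g x t) y.

(* Numerators of the partial derivatives of p/q; the denominator is q^2. *)
Definition pexpr_quot_dx (p q : pexpr) : pexpr :=
  PAdd (PMul (pexpr_dx p) q) (PMul (PC (-1)) (PMul p (pexpr_dx q))).
Definition pexpr_quot_dy (p q : pexpr) : pexpr :=
  PAdd (PMul (pexpr_dy p) q) (PMul (PC (-1)) (PMul p (pexpr_dy q))).

Lemma quotient_on_is_derive_curve h p q g (u v : R -> R) (t u' v' : R) :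
  quotient_on h p q g -> is_derive u t u' -> is_derive v t v' ->
  peval h (u t) (v t) <> 0 ->
  is_derive (fun r => g (u r) (v r)) t
    ((peval (pexpr_quot_dx p q) (u t) (v t) * u' + peval (pexpr_quot_dy p q) (u t) (v t) * v')
      / peval q (u t) (v t) ^ 2).
Proof.
  intros W Hu Hv Hh; destruct (W _ _ Hh) as [Hq _].
  destruct (peval_nonzero_near h _ _ Hh) as [r [Hr Hnear]].
  apply (is_derive_ext_loc (fun r => peval p (u r) (v r) / peval q (u r) (v r))).
  - assert (Cu := ex_derive_continuous u t (ex_intro _ u' Hu)).
    assert (Cv := ex_derive_continuous v t (ex_intro _ v' Hv)).
    apply (filter_imp (fun r' => Rabs (u r' - u t) < r /\ Rabs (v r' - v t) < r)).
    + intros r' [H1 H2]; symmetry; apply W, Hnear; assumption.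
    + apply filter_and; apply locally_abs_lt; rewrite ?Rminus_diag, ?Rabs_R0; assumption.
  - apply (is_derive_eq_val _ _ _ _
      (is_derive_div _ _ _ _ _ (is_derive_peval p u v t u' v' Hu Hv)
         (is_derive_peval q u v t u' v' Hu Hv) Hq)).
    unfold pexpr_quot_dx, pexpr_quot_dy; simpl; field; exact Hq.
Qed.

Lemma quotient_on_partial_x h p q g :
  quotient_on h p q g -> quotient_on h (pexpr_quot_dx p q) (PMul q q) (partial_x g).
Proof.
  intros W x y Hh; destruct (W _ _ Hh) as [Hq _]; simpl.
  split; [now apply Rmult_integral_contrapositive |].
  apply is_derive_unique.
  apply (is_derive_eq_val _ _ _ _ (quotient_on_is_derive_curve h p q g (fun t => t) (fun _ => y)
           x 1 0 W (is_derive_identity x) (is_derive_cst y x) Hh)).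
  simpl; field; exact Hq.
Qed.

Lemma quotient_on_partial_y h p q g :
  quotient_on h p q g -> quotient_on h (pexpr_quot_dy p q) (PMul q q) (partial_y g).
Proof.
  intros W x y Hh; destruct (W _ _ Hh) as [Hq _]; simpl.
  split; [now apply Rmult_integral_contrapositive |].
  apply is_derive_unique.
  apply (is_derive_eq_val _ _ _ _ (quotient_on_is_derive_curve h p q g (fun _ => x) (fun t => t)
           y 0 1 W (is_derive_cst x y) (is_derive_identity y) Hh)).
  simpl; field; exact Hq.
Qed.

Lemma quotient_on_is_derive h p q g (u v : R -> R) (t u' v' : R) :
  quotient_on h p q g -> is_derive u t u' -> is_derive v t v' ->
  peval h (u t) (v t) <> 0 ->
  is_derive (fun r => g (u r) (v r)) t
    (partial_x g (u t) (v t) * u' + partial_y g (u t) (v t) * v').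
Proof.
  intros W Hu Hv Hh.
  apply (is_derive_eq_val _ _ _ _ (quotient_on_is_derive_curve h p q g u v t u' v' W Hu Hv Hh)).
  destruct (W _ _ Hh) as [Hq _].
  destruct (quotient_on_partial_x h p q g W _ _ Hh) as [_ ->].
  destruct (quotient_on_partial_y h p q g W _ _ Hh) as [_ ->].
  simpl; field; exact Hq.
Qed.

Lemma regular_at_partial_x g x y : regular_at g x y -> regular_at (partial_x g) x y.
Proof.
  intros [p [q [h [Hh W]]]]; exists (pexpr_quot_dx p q), (PMul q q), h.
  split; [exact Hh | exact (quotient_on_partial_x h p q g W)].
Qed.

Lemma regular_at_partial_y g x y : regular_at g x y -> regular_at (partial_y g) x y.
Proof.
  intros [p [q [h [Hh W]]]]; exists (pexpr_quot_dy p q), (PMul q q), h.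
  split; [exact Hh | exact (quotient_on_partial_y h p q g W)].
Qed.

Lemma regular_at_is_derive_x g x y :
  regular_at g x y -> is_derive (fun t => g t y) x (partial_x g x y).
Proof.
  intros [p [q [h [Hh W]]]].
  apply (is_derive_eq_val _ _ _ _ (quotient_on_is_derive h p q g (fun t => t) (fun _ => y)
           x 1 0 W (is_derive_identity x) (is_derive_cst y x) Hh)); ring.
Qed.

Lemma regular_at_is_derive_y g x y :
  regular_at g x y -> is_derive (fun t => g x t) y (partial_y g x y).
Proof.
  intros [p [q [h [Hh W]]]].
  apply (is_derive_eq_val _ _ _ _ (quotient_on_is_derive h p q g (fun _ => x) (fun t => t)
           y 0 1 W (is_derive_cst x y) (is_derive_identity y) Hh)); ring.
Qed.

(* In the chart (s, t) |-> (a1 + s, a2 + s t) of the blowing-up at (a1, a2), g is s^n times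
   a function that is regular at every point (0, t) of the exceptional divisor. *)
Definition chart_divisible (n : nat) (a1 a2 : R) (g : R -> R -> R) : Prop :=
  forall t, exists G, regular_at G 0 t /\ exists d, 0 < d /\
    forall s t', s <> 0 -> Rabs s < d -> Rabs (t' - t) < d ->
      g (a1 + s) (a2 + s * t') = s ^ n * G s t'.

Lemma chart_divisible_ext n a1 a2 g g' :
  (forall x y, g x y = g' x y) -> chart_divisible n a1 a2 g -> chart_divisible n a1 a2 g'.
Proof.
  intros E H t; destruct (H t) as [G [HG [d [Hd HgG]]]].
  exists G; split; [exact HG |]; exists d; split; [exact Hd |].
  intros; rewrite <- E; auto.
Qed.

Lemma chart_divisible_mult i j a1 a2 g1 g2 :
  chart_divisible i a1 a2 g1 -> chart_divisible j a1 a2 g2 ->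
  chart_divisible (i + j) a1 a2 (fun x y => g1 x y * g2 x y).
Proof.
  intros H1 H2 t.
  destruct (H1 t) as [G1 [R1 [d1 [D1 E1]]]], (H2 t) as [G2 [R2 [d2 [D2 E2]]]].
  exists (fun x y => G1 x y * G2 x y); split; [now apply regular_at_mult |].
  exists (Rmin d1 d2); split; [now apply Rmin_pos |].
  intros s t' Hs Hsd Ht; pose proof (Rmin_l d1 d2); pose proof (Rmin_r d1 d2).
  rewrite E1, E2 by lra; rewrite pow_add; ring.
Qed.

(* The guard h(s, t') h(0, t') makes p(0, t') = 0 available, so p is divisible by s. *)
Lemma regular_at_divide_x F t : regular_at F 0 t -> (forall t', F 0 t' = 0) ->
  exists G, regular_at G 0 t /\ exists d, 0 < d /\
    forall s t', Rabs s < d -> Rabs (t' - t) < d -> F s t' = s * G s t'.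
Proof.
  intros [p [q [h [Hh W]]]] HF.
  set (h' := PMul h (pexpr_subst h (PC 0) PY)).
  set (G := fun s t' => peval (pexpr_divx p) s t' / peval q s t').
  assert (W' : forall s t', peval h' s t' <> 0 -> peval q s t' <> 0 /\ F s t' = s * G s t').
  { intros s t' [A1 A2]%peval_mul_neq0; rewrite peval_subst in A2; simpl in A2.
    destruct (W _ _ A1) as [Q1 ->], (W _ _ A2) as [Q2 E2].
    assert (P0 : peval p 0 t' = 0).
    { rewrite HF in E2; unfold Rdiv in E2; symmetry in E2.
      destruct (Rmult_integral _ _ E2) as [| E]; [assumption |].
      exfalso; exact (Rinv_neq_0_compat _ Q2 E). }
    split; [exact Q1 |]; unfold G; rewrite (peval_divx p s t'), P0; field; exact Q1. }
  assert (Hh' : peval h' 0 t <> 0).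
  { unfold h'; simpl; rewrite peval_subst; now apply Rmult_integral_contrapositive. }
  exists G; split.
  - exists (pexpr_divx p), q, h'; split; [exact Hh' |].
    intros x y Hxy; split; [exact (proj1 (W' _ _ Hxy)) | reflexivity].
  - destruct (peval_nonzero_near h' 0 t Hh') as [r [Hr Hnear]].
    exists r; split; [exact Hr |].
    intros s t' Hs Ht; apply W', Hnear; [rewrite Rminus_0_r |]; assumption.
Qed.

Lemma chart_divisible_of_regular_chart a1 a2 f : f a1 a2 = 0 ->
  (forall t, regular_at (fun s t => f (a1 + s) (a2 + s * t)) 0 t) ->
  chart_divisible 1 a1 a2 f.
Proof.
  intros H0 H t.
  destruct (regular_at_divide_x _ t (H t)) as [G [HG [d [Hd E]]]].
  { intros t'; rewrite Rplus_0_r, Rmult_0_l, Rplus_0_r; exact H0. }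
  exists G; split; [exact HG |]; exists d; split; [exact Hd |].
  intros s t' _ Hs Ht; rewrite E by assumption; ring.
Qed.

Section ChartPartials.

Variables (n : nat) (a1 a2 t d : R) (g G : R -> R -> R).
Hypothesis d_pos : 0 < d.
Hypothesis g_chart : forall s t', s <> 0 -> Rabs s < d -> Rabs (t' - t) < d ->
  g (a1 + s) (a2 + s * t') = s ^ S n * G s t'.

Lemma chart_locally_x s t' : s <> 0 -> Rabs s < d -> Rabs (t' - t) < d ->
  locally (a1 + s) (fun x => (x - a1) ^ S n * G (x - a1) (s * t' / (x - a1)) = g x (a2 + s * t')).
Proof.
  intros Hs Hsd Ht.
  assert (Hshift : continuous (fun x => x - a1) (a1 + s))
    by (apply (ex_derive_continuous (fun x => x - a1)); auto_derive; easy).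
  assert (Hslope : continuous (fun x => s * t' / (x - a1)) (a1 + s)).
  { apply (ex_derive_continuous (fun x => s * t' / (x - a1))); auto_derive; intros E; apply Hs; lra. }
  apply (filter_imp (fun x => Rabs ((x - a1) - s) < Rabs s /\ Rabs ((x - a1) - 0) < d /\
                              Rabs (s * t' / (x - a1) - t) < d)).
  - intros x [Hne [Hx Hc]]; rewrite Rminus_0_r in Hx.
    assert (Hx0 : x - a1 <> 0).
    { intros E; rewrite E, Rminus_0_l, Rabs_Ropp in Hne; lra. }
    rewrite <- g_chart by assumption.
    f_equal; [ring | field; exact Hx0].
  - repeat apply filter_and; apply locally_abs_lt; try assumption;
      replace (a1 + s - a1) with s by ring.
    + rewrite Rminus_diag, Rabs_R0; now apply Rabs_pos_lt.
    + now rewrite Rminus_0_r.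
    + replace (s * t' / s) with t' by (field; exact Hs); exact Ht.
Qed.

Lemma chart_locally_y s t' : s <> 0 -> Rabs s < d -> Rabs (t' - t) < d ->
  locally (a2 + s * t') (fun y => s ^ S n * G s ((y - a2) / s) = g (a1 + s) y).
Proof.
  intros Hs Hsd Ht.
  assert (Hslope : continuous (fun y => (y - a2) / s) (a2 + s * t')).
  { apply (ex_derive_continuous (fun y => (y - a2) / s)); auto_derive; easy. }
  apply (filter_imp (fun y => Rabs ((y - a2) / s - t) < d)).
  - intros y Hy; rewrite <- g_chart by assumption.
    f_equal; field; exact Hs.
  - apply locally_abs_lt; [exact Hslope |].
    replace ((a2 + s * t' - a2) / s) with t' by (field; exact Hs); exact Ht.
Qed.

Variables (h p q : pexpr).
Hypothesis G_quotient : quotient_on h p q G.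

Lemma chart_partial_x s t' : s <> 0 -> Rabs s < d -> Rabs (t' - t) < d -> peval h s t' <> 0 ->
  partial_x g (a1 + s) (a2 + s * t') =
  s ^ n * (INR (S n) * G s t' + s * partial_x G s t' + - t' * partial_y G s t').
Proof.
  intros Hs Hsd Ht Hh.
  assert (Hu : is_derive (fun x => x - a1) (a1 + s) 1) by (auto_derive; [easy | ring]).
  assert (Hv : is_derive (fun x => s * t' / (x - a1)) (a1 + s) (- t' / s)).
  { auto_derive; [intros E; apply Hs; lra |].
    replace (a1 + s + - a1) with s by ring; field; exact Hs. }
  assert (Hpow : is_derive (fun x => (x - a1) ^ S n) (a1 + s) (INR (S n) * s ^ n)).
  { auto_derive; [easy |]; rewrite S_INR; replace (a1 + s + - a1) with s by ring.
    destruct n; simpl; ring. }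
  assert (HG := quotient_on_is_derive h p q G _ _ _ _ _ G_quotient Hu Hv); cbv beta in HG.
  replace (a1 + s - a1) with s in HG by ring.
  replace (s * t' / s) with t' in HG by (field; exact Hs).
  specialize (HG Hh).
  apply is_derive_unique, (is_derive_ext_loc _ _ _ _ (chart_locally_x s t' Hs Hsd Ht)).
  apply (is_derive_eq_val _ _ _ _ (is_derive_mult _ _ _ _ _ Hpow HG Rmult_comm)).
  replace (a1 + s - a1) with s by ring; replace (s * t' / s) with t' by (field; exact Hs).
  unfold plus, mult; simpl; field; exact Hs.
Qed.

Lemma chart_partial_y s t' : s <> 0 -> Rabs s < d -> Rabs (t' - t) < d -> peval h s t' <> 0 ->
  partial_y g (a1 + s) (a2 + s * t') = s ^ n * partial_y G s t'.
Proof.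
  intros Hs Hsd Ht Hh.
  assert (Hv : is_derive (fun y => (y - a2) / s) (a2 + s * t') (/ s))
    by (auto_derive; [easy | field; exact Hs]).
  assert (HG := quotient_on_is_derive h p q G _ _ _ _ _ G_quotient (is_derive_cst s _) Hv).
  cbv beta in HG; replace ((a2 + s * t' - a2) / s) with t' in HG by (field; exact Hs).
  specialize (HG Hh).
  apply is_derive_unique, (is_derive_ext_loc _ _ _ _ (chart_locally_y s t' Hs Hsd Ht)).
  apply (is_derive_eq_val _ _ _ _ (is_derive_mult _ _ _ _ _ (is_derive_cst (s ^ S n) _) HG Rmult_comm)).
  replace ((a2 + s * t' - a2) / s) with t' by (field; exact Hs).
  unfold plus, mult; simpl; field; exact Hs.
Qed.

End ChartPartials.

Lemma chart_divisible_partial_x n a1 a2 g :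
  chart_divisible (S n) a1 a2 g -> chart_divisible n a1 a2 (partial_x g).
Proof.
  intros H t; destruct (H t) as [G [HG [d [Hd HgG]]]].
  pose proof HG as [p [q [h [Hh W]]]].
  destruct (peval_nonzero_near h 0 t Hh) as [r [Hr Hnear]].
  exists (fun s t => INR (S n) * G s t + s * partial_x G s t + - t * partial_y G s t); split.
  { apply regular_at_plus; [apply regular_at_plus |].
    - exact (regular_at_mult (peval (PC (INR (S n)))) G _ _ (regular_at_peval _ _ _) HG).
    - exact (regular_at_mult (peval PX) _ _ _ (regular_at_peval _ _ _) (regular_at_partial_x _ _ _ HG)).
    - apply (regular_at_ext (fun a b => peval (PMul (PC (-1)) PY) a b * partial_y G a b));
        [intros; simpl; ring |].
      exact (regular_at_mult _ _ _ _ (regular_at_peval _ _ _) (regular_at_partial_y _ _ _ HG)). }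
  exists (Rmin d r); split; [now apply Rmin_pos |].
  intros s t' Hs Hsd Ht; pose proof (Rmin_l d r); pose proof (Rmin_r d r).
  apply (chart_partial_x n a1 a2 t d g G HgG h p q W); try lra.
  apply Hnear; rewrite ?Rminus_0_r; lra.
Qed.

Lemma chart_divisible_partial_y n a1 a2 g :
  chart_divisible (S n) a1 a2 g -> chart_divisible n a1 a2 (partial_y g).
Proof.
  intros H t; destruct (H t) as [G [HG [d [Hd HgG]]]].
  pose proof HG as [p [q [h [Hh W]]]].
  destruct (peval_nonzero_near h 0 t Hh) as [r [Hr Hnear]].
  exists (partial_y G); split; [exact (regular_at_partial_y _ _ _ HG) |].
  exists (Rmin d r); split; [now apply Rmin_pos |].
  intros s t' Hs Hsd Ht; pose proof (Rmin_l d r); pose proof (Rmin_r d r).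
  apply (chart_partial_y n a1 a2 t d g G HgG h p q W); try lra.
  apply Hnear; rewrite ?Rminus_0_r; lra.
Qed.

(* The radius [e] doubles as the reciprocal of the bound, so that the compactness of [-1, 1]
   applies to a single positive function of [t]. *)
Lemma chart_divisible_local_bound n a1 a2 g : chart_divisible n a1 a2 g ->
  forall t, exists e, 0 < e /\ forall s t', s <> 0 -> Rabs s < e -> Rabs (t' - t) < e ->
    Rabs (g (a1 + s) (a2 + s * t')) <= / e * Rabs s ^ n.
Proof.
  intros H t; destruct (H t) as [G [HG [d [Hd HgG]]]].
  destruct (regular_at_bounded G 0 t HG) as [d' [M [Hd' HM]]].
  assert (HM1 : 0 < / (Rabs M + 1)) by (apply Rinv_0_lt_compat; pose proof (Rabs_pos M); lra).
  set (e := Rmin (Rmin d d') (/ (Rabs M + 1))).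
  assert (He : e <= d /\ e <= d' /\ e <= / (Rabs M + 1)).
  { pose proof (Rmin_l (Rmin d d') (/ (Rabs M + 1))); pose proof (Rmin_r (Rmin d d') (/ (Rabs M + 1))).
    pose proof (Rmin_l d d'); pose proof (Rmin_r d d'); unfold e; lra. }
  assert (He0 : 0 < e) by (repeat apply Rmin_pos; assumption).
  exists e; split; [exact He0 |].
  intros s t' Hs Hse Ht.
  rewrite HgG, Rabs_mult, <- RPow_abs, Rmult_comm by lra.
  apply Rmult_le_compat_r; [apply pow_le, Rabs_pos |].
  apply Rle_trans with (Rabs M + 1).
  - pose proof (Rle_abs M); pose proof (HM s t' ltac:(rewrite Rminus_0_r; lra) ltac:(lra)); lra.
  - rewrite <- (Rinv_inv (Rabs M + 1)) at 1; apply Rinv_le_contravar; lra.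
Qed.

Lemma chart_divisible_bound n a1 a2 g : chart_divisible n a1 a2 g -> exists d M, 0 < d /\ 0 <= M /\
  forall s t', s <> 0 -> Rabs s < d -> -1 <= t' <= 1 ->
    Rabs (g (a1 + s) (a2 + s * t')) <= M * Rabs s ^ n.
Proof.
  intros H.
  assert (Hradius : forall t, { e : R | 0 < e /\ forall s t', s <> 0 -> Rabs s < e ->
            Rabs (t' - t) < e -> Rabs (g (a1 + s) (a2 + s * t')) <= / e * Rabs s ^ n })
    by (intros t; apply constructive_indefinite_description, chart_divisible_local_bound, H).
  set (delta := fun t => mkposreal (proj1_sig (Hradius t)) (proj1 (proj2_sig (Hradius t)))).
  destruct (compactness_value_1d (-1) 1 delta) as [d Hd].
  exists d, (/ d); split; [apply cond_pos |]; split; [left; apply Rinv_0_lt_compat, cond_pos |].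
  intros s t' Hs Hsd Ht'.
  destruct (NNPP _ (Hd t' Ht')) as [t [_ [Htt Hdt]]].
  unfold delta in Htt, Hdt; simpl in Htt, Hdt.
  destruct (Hradius t) as [e [He Be]]; simpl in Htt, Hdt.
  apply Rle_trans with (/ e * Rabs s ^ n); [apply Be; lra |].
  apply Rmult_le_compat_r; [apply pow_le, Rabs_pos |].
  apply Rinv_le_contravar; [apply cond_pos | exact Hdt].
Qed.

Lemma chart_divisible_cone_bound n a1 a2 g : g a1 a2 = 0 -> chart_divisible n a1 a2 g ->
  exists d M, 0 < d /\ 0 <= M /\ forall x y, Rabs (x - a1) < d -> Rabs (y - a2) <= Rabs (x - a1) ->
    Rabs (g x y) <= M * Rabs (x - a1) ^ n.
Proof.
  intros H0 H; destruct (chart_divisible_bound n a1 a2 g H) as [d [M [Hd [HM B]]]].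
  exists d, M; split; [exact Hd |]; split; [exact HM |].
  intros x y Hx Hy.
  destruct (Req_dec (x - a1) 0) as [Zx | Zx].
  - rewrite Zx, Rabs_R0 in Hy.
    assert (y = a2) by (pose proof (Rabs_pos (y - a2)); destruct (Req_dec (y - a2) 0) as [|Zy];
                          [lra | apply Rabs_pos_lt in Zy; lra]).
    replace x with a1 by lra; subst y; rewrite H0, Rabs_R0.
    apply Rmult_le_pos; [exact HM | apply pow_le, Rabs_pos].
  - assert (Hslope : -1 <= (y - a2) / (x - a1) <= 1).
    { apply Rabs_le_between; unfold Rdiv; rewrite Rabs_mult, Rabs_inv.
      apply (Rmult_le_reg_r (Rabs (x - a1))); [now apply Rabs_pos_lt |].
      rewrite Rmult_assoc, Rinv_l, Rmult_1_r, Rmult_1_l; [exact Hy | now apply Rabs_no_R0]. }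
    generalize (B (x - a1) ((y - a2) / (x - a1)) Zx Hx Hslope).
    replace (a1 + (x - a1)) with x by ring.
    replace (a2 + (x - a1) * ((y - a2) / (x - a1))) with y by (field; exact Zx).
    easy.
Qed.

(* The second chart (u, v) |-> (a1 + u v, a2 + v) is the first one after exchanging the
   coordinates. *)
Definition vanishes_to_order (n : nat) (a1 a2 : R) (g : R -> R -> R) : Prop :=
  g a1 a2 = 0 /\ chart_divisible n a1 a2 g /\ chart_divisible n a2 a1 (fun x y => g y x).

Lemma vanishes_to_order_swap n a1 a2 g :
  vanishes_to_order n a1 a2 g -> vanishes_to_order n a2 a1 (fun x y => g y x).
Proof. intros [H0 [C C']]; repeat split; assumption. Qed.

Lemma vanishes_to_order_bound n a1 a2 g : vanishes_to_order n a1 a2 g ->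
  exists d M, 0 < d /\ 0 <= M /\ forall x y, Rabs (x - a1) < d -> Rabs (y - a2) < d ->
    Rabs (g x y) <= M * Rmax (Rabs (x - a1)) (Rabs (y - a2)) ^ n.
Proof.
  intros [H0 [C C']].
  destruct (chart_divisible_cone_bound _ _ _ _ H0 C) as [d1 [M1 [D1 [P1 B1]]]].
  destruct (chart_divisible_cone_bound _ _ _ _ H0 C') as [d2 [M2 [D2 [P2 B2]]]].
  exists (Rmin d1 d2), (Rmax M1 M2); split; [now apply Rmin_pos |].
  pose proof (Rmax_l M1 M2); pose proof (Rmax_r M1 M2); pose proof (Rmin_l d1 d2);
    pose proof (Rmin_r d1 d2).
  split; [lra |]; intros x y Hx Hy.
  destruct (Rle_lt_dec (Rabs (y - a2)) (Rabs (x - a1))) as [L | L].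
  - rewrite (Rmax_left (Rabs (x - a1))) by exact L.
    apply Rle_trans with (M1 * Rabs (x - a1) ^ n); [apply B1; lra |].
    apply Rmult_le_compat_r; [apply pow_le, Rabs_pos | lra].
  - rewrite (Rmax_right (Rabs (x - a1))) by lra.
    apply Rle_trans with (M2 * Rabs (y - a2) ^ n); [apply (B2 y x); lra |].
    apply Rmult_le_compat_r; [apply pow_le, Rabs_pos | lra].
Qed.

Lemma pow_le_pow_le_1 x j n : 0 <= x <= 1 -> (j <= n)%nat -> x ^ n <= x ^ j.
Proof.
  intros Hx Hjn; replace n with (j + (n - j))%nat by lia; rewrite pow_add.
  rewrite <- (Rmult_1_r (x ^ j)) at 2.
  apply Rmult_le_compat_l; [apply pow_le; lra |].
  rewrite <- (pow1 (n - j)); apply pow_incr; lra.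
Qed.

Lemma vanishes_to_order_bound_le j n a1 a2 g : (j <= n)%nat -> vanishes_to_order n a1 a2 g ->
  exists d M, 0 < d /\ 0 <= M /\ forall x y, Rabs (x - a1) < d -> Rabs (y - a2) < d ->
    Rabs (g x y) <= M * Rmax (Rabs (x - a1)) (Rabs (y - a2)) ^ j.
Proof.
  intros Hjn H; destruct (vanishes_to_order_bound n a1 a2 g H) as [d [M [Hd [HM B]]]].
  exists (Rmin d 1), M; split; [apply Rmin_pos; lra |]; split; [exact HM |].
  intros x y Hx Hy; pose proof (Rmin_l d 1); pose proof (Rmin_r d 1).
  apply Rle_trans with (1 := B x y ltac:(lra) ltac:(lra)).
  apply Rmult_le_compat_l; [exact HM |]; apply pow_le_pow_le_1; [| exact Hjn].
  split; [apply (Rle_trans _ _ _ (Rabs_pos _) (Rmax_l _ _)) |].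
  apply Rmax_lub; lra.
Qed.

Lemma vanishes_to_order_cont n a1 a2 g :
  (1 <= n)%nat -> vanishes_to_order n a1 a2 g -> cont_at g a1 a2.
Proof.
  intros Hn H; destruct (vanishes_to_order_bound_le 1 n a1 a2 g Hn H) as [d [M [Hd [HM B]]]].
  intros eps He.
  assert (Heps : 0 < eps / (M + 1)) by (apply Rdiv_lt_0_compat; lra).
  exists (Rmin d (eps / (M + 1))); split; [now apply Rmin_pos |].
  intros x y Hx Hy; pose proof (Rmin_l d (eps / (M + 1))); pose proof (Rmin_r d (eps / (M + 1))).
  rewrite (proj1 H), Rminus_0_r.
  apply Rle_lt_trans with (1 := B x y ltac:(lra) ltac:(lra)); rewrite pow_1.
  apply Rle_lt_trans with (M * (eps / (M + 1))).
  - apply Rmult_le_compat_l; [exact HM |]; apply Rmax_lub; lra.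
  - apply (Rmult_lt_reg_r (M + 1)); [lra |]; field_simplify; lra.
Qed.

Lemma is_derive_0_of_bound_sq (f : R -> R) (a d M : R) : 0 < d -> 0 <= M -> f a = 0 ->
  (forall h, Rabs h < d -> Rabs (f (a + h)) <= M * Rabs h ^ 2) -> is_derive f a 0.
Proof.
  intros Hd HM H0 B; apply is_derive_Reals; intros eps He.
  assert (Heps : 0 < eps / (M + 1)) by (apply Rdiv_lt_0_compat; lra).
  exists (mkposreal _ (Rmin_pos _ _ Hd Heps)); simpl; intros h Hh Hhd.
  pose proof (Rmin_l d (eps / (M + 1))); pose proof (Rmin_r d (eps / (M + 1))).
  assert (Hh0 : 0 < Rabs h) by now apply Rabs_pos_lt.
  rewrite H0, !Rminus_0_r; unfold Rdiv; rewrite Rabs_mult, Rabs_inv.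
  apply (Rmult_lt_reg_r (Rabs h)); [exact Hh0 |].
  rewrite Rmult_assoc, Rinv_l, Rmult_1_r by lra.
  apply Rle_lt_trans with (1 := B h ltac:(lra)).
  replace (M * Rabs h ^ 2) with ((M * Rabs h) * Rabs h) by ring.
  apply Rmult_lt_compat_r; [exact Hh0 |].
  apply Rle_lt_trans with (M * (eps / (M + 1))).
  - apply Rmult_le_compat_l; lra.
  - apply (Rmult_lt_reg_r (M + 1)); [lra |]; field_simplify; lra.
Qed.

Lemma vanishes_to_order_is_derive_x n a1 a2 g :
  (2 <= n)%nat -> vanishes_to_order n a1 a2 g -> is_derive (fun x => g x a2) a1 0.
Proof.
  intros Hn H; destruct (vanishes_to_order_bound_le 2 n a1 a2 g Hn H) as [d [M [Hd [HM B]]]].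
  apply (is_derive_0_of_bound_sq _ a1 d M Hd HM (proj1 H)).
  intros h Hh; generalize (B (a1 + h) a2).
  replace (a1 + h - a1) with h by ring; rewrite Rminus_diag, Rabs_R0, Rmax_left by apply Rabs_pos.
  intros Bh; exact (Bh Hh Hd).
Qed.

Lemma vanishes_to_order_is_derive_y n a1 a2 g :
  (2 <= n)%nat -> vanishes_to_order n a1 a2 g -> is_derive (fun y => g a1 y) a2 0.
Proof.
  intros Hn H; exact (vanishes_to_order_is_derive_x n a2 a1 _ Hn (vanishes_to_order_swap _ _ _ _ H)).
Qed.

(* Exchanging the coordinates turns [partial_x] into [partial_y] (by conversion). *)
Lemma vanishes_to_order_partial_x n a1 a2 g : (1 <= n)%nat ->
  vanishes_to_order (S n) a1 a2 g -> vanishes_to_order n a1 a2 (partial_x g).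
Proof.
  intros Hn H.
  assert (Hd := vanishes_to_order_is_derive_x (S n) a1 a2 g ltac:(lia) H).
  destruct H as [_ [C C']]; split; [| split].
  - exact (is_derive_unique _ _ _ Hd).
  - exact (chart_divisible_partial_x _ _ _ _ C).
  - exact (chart_divisible_partial_y _ _ _ _ C').
Qed.

Lemma vanishes_to_order_partial_y n a1 a2 g : (1 <= n)%nat ->
  vanishes_to_order (S n) a1 a2 g -> vanishes_to_order n a1 a2 (partial_y g).
Proof.
  intros Hn H.
  exact (vanishes_to_order_swap _ _ _ _
           (vanishes_to_order_partial_x n a2 a1 _ Hn (vanishes_to_order_swap _ _ _ _ H))).
Qed.

Lemma vanishes_to_order_mult i j a1 a2 g1 g2 :
  vanishes_to_order i a1 a2 g1 -> vanishes_to_order j a1 a2 g2 ->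
  vanishes_to_order (i + j) a1 a2 (fun x y => g1 x y * g2 x y).
Proof.
  intros [H1 [C1 C1']] [H2 [C2 C2']]; split; [| split].
  - rewrite H1; ring.
  - exact (chart_divisible_mult _ _ _ _ _ _ C1 C2).
  - exact (chart_divisible_mult _ _ _ _ _ _ C1' C2').
Qed.

Lemma vanishes_to_order_pow n a1 a2 f : (1 <= n)%nat ->
  vanishes_to_order 1 a1 a2 f -> vanishes_to_order n a1 a2 (fun x y => f x y ^ n).
Proof.
  intros Hn H; induction n as [| [| n] IH]; [lia | |].
  - destruct H as [H0 [C C']]; split; [| split].
    + simpl; rewrite H0; ring.
    + apply (chart_divisible_ext _ _ _ f); [intros; ring | exact C].
    + apply (chart_divisible_ext _ _ _ (fun x y => f y x)); [intros; ring | exact C'].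
  - exact (vanishes_to_order_mult 1 (S n) _ _ _ _ H (IH ltac:(lia))).
Qed.

Lemma regular_at_chart_x f a1 a2 : regular_at f a1 a2 ->
  forall t, regular_at (fun s t => f (a1 + s) (a2 + s * t)) 0 t.
Proof.
  intros [p [q [h [Hh W]]]] t.
  apply (regular_at_subst f p q h (PAdd (PC a1) PX) (PAdd (PC a2) (PMul PX PY)) 0 t); [| exact W].
  simpl; now rewrite Rplus_0_r, Rmult_0_l, Rplus_0_r.
Qed.

Lemma regular_at_chart_y f a1 a2 : regular_at f a1 a2 ->
  forall u, regular_at (fun u v => f (a1 + u * v) (a2 + v)) u 0.
Proof.
  intros [p [q [h [Hh W]]]] u.
  apply (regular_at_subst f p q h (PAdd (PC a1) (PMul PX PY)) (PAdd (PC a2) PY) u 0); [| exact W].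
  simpl; now rewrite Rmult_0_r, !Rplus_0_r.
Qed.

Lemma R0_1_vanishes_to_order_1 f a1 a2 : R0_1 f -> f a1 a2 = 0 -> vanishes_to_order 1 a1 a2 f.
Proof.
  intros [_ [S [Hreg Hcenter]]] H0.
  assert (Hcharts : (forall t, regular_at (fun s t => f (a1 + s) (a2 + s * t)) 0 t) /\
                    (forall u, regular_at (fun u v => f (a1 + u * v) (a2 + v)) u 0)).
  { destruct (classic (In (a1, a2) S)) as [HS | HS]; [now apply Hcenter |].
    split; [apply regular_at_chart_x | apply regular_at_chart_y]; now apply Hreg. }
  destruct Hcharts as [Hchart_x Hchart_y].
  split; [exact H0 | split]; apply chart_divisible_of_regular_chart; try assumption.
  intros t; apply (regular_at_ext (fun s t => f (a1 + t * s) (a2 + s))).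
  - intros s t'; now rewrite Rmult_comm.
  - exact (regular_at_swap _ t 0 (Hchart_y t)).
Qed.

Lemma list_points_isolated (S : list (R * R)) a1 a2 : exists rho, 0 < rho /\
  forall x y, Rabs (x - a1) < rho -> Rabs (y - a2) < rho -> In (x, y) S -> x = a1 /\ y = a2.
Proof.
  induction S as [| [b1 b2] S [rho [Hrho IH]]].
  - exists 1; split; [lra | intros x y _ _ []].
  - destruct (Req_dec b1 a1) as [E1 | N1]; [destruct (Req_dec b2 a2) as [E2 | N2] |].
    + exists rho; split; [exact Hrho |].
      intros x y Hx Hy [E | HS]; [injection E; intros; subst; tauto | now apply IH].
    + set (r := Rabs (b2 - a2)).
      assert (Hr : 0 < r) by (apply Rabs_pos_lt; lra).
      exists (Rmin rho r); split; [now apply Rmin_pos |].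
      pose proof (Rmin_l rho r); pose proof (Rmin_r rho r).
      intros x y Hx Hy [E | HS]; [injection E; intros; subst; unfold r in *; lra |].
      apply IH; trivial; lra.
    + set (r := Rabs (b1 - a1)).
      assert (Hr : 0 < r) by (apply Rabs_pos_lt; lra).
      exists (Rmin rho r); split; [now apply Rmin_pos |].
      pose proof (Rmin_l rho r); pose proof (Rmin_r rho r).
      intros x y Hx Hy [E | HS]; [injection E; intros; subst; unfold r in *; lra |].
      apply IH; trivial; lra.
Qed.

Definition box (a1 a2 rho : R) : R -> R -> Prop :=
  fun x y => Rabs (x - a1) < rho /\ Rabs (y - a2) < rho.

Definition regular_off_center (a1 a2 rho : R) (g : R -> R -> R) : Prop :=
  forall x y, box a1 a2 rho x y -> (x <> a1 \/ y <> a2) -> regular_at g x y.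

Lemma R0_1_regular_off_center f a1 a2 : R0_1 f ->
  exists rho, 0 < rho /\ regular_off_center a1 a2 rho f.
Proof.
  intros [_ [S [Hreg _]]].
  destruct (list_points_isolated S a1 a2) as [rho [Hrho HS]].
  exists rho; split; [exact Hrho |].
  intros x y [Hx Hy] Hne; apply Hreg; intros Hin.
  destruct (HS x y Hx Hy Hin); tauto.
Qed.

Lemma box_open a1 a2 rho : open2 (box a1 a2 rho).
Proof.
  intros x y [Hx Hy]; exists (Rmin (rho - Rabs (x - a1)) (rho - Rabs (y - a2))).
  split; [apply Rmin_pos; lra |]; intros x' y' H1 H2; unfold box.
  pose proof (Rmin_l (rho - Rabs (x - a1)) (rho - Rabs (y - a2))).
  pose proof (Rmin_r (rho - Rabs (x - a1)) (rho - Rabs (y - a2))).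
  pose proof (Rabs_triang (x' - x) (x - a1)); pose proof (Rabs_triang (y' - y) (y - a2)).
  replace (x' - a1) with ((x' - x) + (x - a1)) by ring.
  replace (y' - a2) with ((y' - y) + (y - a2)) by ring.
  split; lra.
Qed.

Lemma box_center a1 a2 rho : 0 < rho -> box a1 a2 rho a1 a2.
Proof. intros Hrho; split; rewrite Rminus_diag, Rabs_R0; exact Hrho. Qed.

Lemma open2_locally_x U x y : open2 U -> U x y -> locally x (fun t => U t y).
Proof.
  intros HU H; destruct (HU x y H) as [r [Hr Hb]]; exists (mkposreal r Hr).
  intros t Ht; apply Hb; [exact Ht | rewrite Rminus_diag, Rabs_R0; exact Hr].
Qed.

Lemma open2_locally_y U x y : open2 U -> U x y -> locally y (fun t => U x t).
Proof.
  intros HU H; destruct (HU x y H) as [r [Hr Hb]]; exists (mkposreal r Hr).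
  intros t Ht; apply Hb; [rewrite Rminus_diag, Rabs_R0; exact Hr | exact Ht].
Qed.

Lemma is_pderiv_ext U w g1 g2 h : open2 U -> (forall x y, U x y -> g1 x y = g2 x y) ->
  is_pderiv U w g1 h -> exists h', is_pderiv U w g2 h' /\ forall x y, U x y -> h x y = h' x y.
Proof.
  intros HU E H; revert E; destruct H as [g | w g g' h Hg Hw | w g g' h Hg Hw]; intros E.
  - exists g2; split; [constructor | exact E].
  - exists h; split; [| trivial]; apply pd_x with g'; [| exact Hw].
    intros x y Hxy; apply is_derive_Reals.
    apply (is_derive_ext_loc (fun t => g t y)); [| apply is_derive_Reals, Hg, Hxy].
    apply (filter_imp _ _ (fun t Ht => E t y Ht) (open2_locally_x U x y HU Hxy)).
  - exists h; split; [| trivial]; apply pd_y with g'; [| exact Hw].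
    intros x y Hxy; apply is_derive_Reals.
    apply (is_derive_ext_loc (fun t => g x t)); [| apply is_derive_Reals, Hg, Hxy].
    apply (filter_imp _ _ (fun t Ht => E x t Ht) (open2_locally_y U x y HU Hxy)).
Qed.

Lemma is_pderiv_cons_x U w g gx h : open2 U ->
  (forall x y, U x y -> is_derive (fun t => g t y) x (gx x y)) ->
  is_pderiv U (Defs.Dx :: w) g h -> exists h', is_pderiv U w gx h' /\ forall x y, U x y -> h x y = h' x y.
Proof.
  intros HU Hgx H; inversion H as [| w' g0 g' h0 Hg Hw |]; subst.
  apply (is_pderiv_ext U w g' gx h HU); [| exact Hw].
  intros x y Hxy; apply (uniqueness_limite (fun t => g t y) x); [apply Hg, Hxy |].
  apply is_derive_Reals, Hgx, Hxy.
Qed.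

Lemma is_pderiv_cons_y U w g gy h : open2 U ->
  (forall x y, U x y -> is_derive (fun t => g x t) y (gy x y)) ->
  is_pderiv U (Defs.Dy :: w) g h -> exists h', is_pderiv U w gy h' /\ forall x y, U x y -> h x y = h' x y.
Proof.
  intros HU Hgy H; inversion H as [| | w' g0 g' h0 Hg Hw]; subst.
  apply (is_pderiv_ext U w g' gy h HU); [| exact Hw].
  intros x y Hxy; apply (uniqueness_limite (fun t => g x t) y); [apply Hg, Hxy |].
  apply is_derive_Reals, Hgy, Hxy.
Qed.

Lemma point_eq_or_neq (x y a1 a2 : R) : (x = a1 /\ y = a2) \/ (x <> a1 \/ y <> a2).
Proof. destruct (Req_dec x a1), (Req_dec y a2); tauto. Qed.

Section FlatAtCenter.

Variables (a1 a2 rho : R).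
Hypothesis rho_pos : 0 < rho.

Lemma cont_on_box n g : (1 <= n)%nat -> vanishes_to_order n a1 a2 g ->
  regular_off_center a1 a2 rho g -> cont_on (box a1 a2 rho) g.
Proof.
  intros Hn Hg Hreg x y Hxy.
  destruct (point_eq_or_neq x y a1 a2) as [[-> ->] | Hne].
  - exact (vanishes_to_order_cont n a1 a2 g Hn Hg).
  - exact (regular_at_cont _ _ _ (Hreg x y Hxy Hne)).
Qed.

Lemma is_derive_on_box n g : (2 <= n)%nat -> vanishes_to_order n a1 a2 g ->
  regular_off_center a1 a2 rho g -> forall x y, box a1 a2 rho x y ->
  is_derive (fun t => g t y) x (partial_x g x y) /\ is_derive (fun t => g x t) y (partial_y g x y).
Proof.
  intros Hn Hg Hreg x y Hxy.
  destruct (point_eq_or_neq x y a1 a2) as [[-> ->] | Hne].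
  - assert (Dx0 := vanishes_to_order_is_derive_x n a1 a2 g Hn Hg).
    assert (Dy0 := vanishes_to_order_is_derive_y n a1 a2 g Hn Hg).
    assert (Ex : partial_x g a1 a2 = 0) by exact (is_derive_unique _ _ _ Dx0).
    assert (Ey : partial_y g a1 a2 = 0) by exact (is_derive_unique _ _ _ Dy0).
    rewrite Ex, Ey; split; assumption.
  - split; [apply regular_at_is_derive_x | apply regular_at_is_derive_y]; exact (Hreg x y Hxy Hne).
Qed.

(* Each derivative lowers the order of vanishing by one, so [j < n] keeps it positive
   down to the derivatives of order [j]. *)
Lemma vanishes_to_order_flat_on_box j : forall n g, (j < n)%nat ->
  vanishes_to_order n a1 a2 g -> regular_off_center a1 a2 rho g ->
  Ck_on j (box a1 a2 rho) g /\
  forall w h, (length w <= j)%nat -> is_pderiv (box a1 a2 rho) w g h -> h a1 a2 = 0.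
Proof.
  induction j as [| j IH]; intros n g Hjn Hg Hreg.
  - split; [split; [exact (cont_on_box n g ltac:(lia) Hg Hreg) | exact I] |].
    intros [| dir w] h Hw Hd; [inversion Hd; subst; exact (proj1 Hg) | simpl in Hw; lia].
  - destruct n as [| n]; [lia |].
    assert (Hgx := vanishes_to_order_partial_x n a1 a2 g ltac:(lia) Hg).
    assert (Hgy := vanishes_to_order_partial_y n a1 a2 g ltac:(lia) Hg).
    assert (Hregx : regular_off_center a1 a2 rho (partial_x g))
      by (intros x y Hxy Hne; apply regular_at_partial_x, Hreg; assumption).
    assert (Hregy : regular_off_center a1 a2 rho (partial_y g))
      by (intros x y Hxy Hne; apply regular_at_partial_y, Hreg; assumption).
    destruct (IH n _ ltac:(lia) Hgx Hregx) as [Cx Vx].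
    destruct (IH n _ ltac:(lia) Hgy Hregy) as [Cy Vy].
    assert (Hder := is_derive_on_box (S n) g ltac:(lia) Hg Hreg).
    split.
    + split; [exact (cont_on_box (S n) g ltac:(lia) Hg Hreg) |].
      exists (partial_x g), (partial_y g); split; [| split; assumption].
      intros x y Hxy; destruct (Hder x y Hxy) as [D1 D2]; split; apply is_derive_Reals; assumption.
    + assert (Hc := box_center a1 a2 rho rho_pos).
      intros [| [|] w] h Hw Hd; simpl in Hw.
      * inversion Hd; subst; exact (proj1 Hg).
      * destruct (is_pderiv_cons_x _ w g (partial_x g) h (box_open a1 a2 rho)
                    (fun x y Hxy => proj1 (Hder x y Hxy)) Hd) as [h' [Hd' Eh]].
        rewrite Eh by exact Hc; apply (Vx w h'); [lia | exact Hd'].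
      * destruct (is_pderiv_cons_y _ w g (partial_y g) h (box_open a1 a2 rho)
                    (fun x y Hxy => proj2 (Hder x y Hxy)) Hd) as [h' [Hd' Eh]].
        rewrite Eh by exact Hc; apply (Vy w h'); [lia | exact Hd'].
Qed.

End FlatAtCenter.

Theorem corollary3p9 (k : nat) (f : R -> R -> R) :
  (0 < k)%nat -> R0_1 f ->
  forall m : nat, (2 * k <= m)%nat -> kflat k (fun x y => f x y ^ m).
Proof.
  intros Hk Hf m Hm x0 y0 Hz.
  assert (Hf0 : f x0 y0 = 0)
    by (destruct (Req_dec (f x0 y0) 0) as [| Hne]; [assumption | now apply (pow_nonzero _ m) in Hne]).
  assert (Hvan : vanishes_to_order m x0 y0 (fun x y => f x y ^ m))
    by (apply vanishes_to_order_pow; [lia | exact (R0_1_vanishes_to_order_1 f x0 y0 Hf Hf0)]).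
  destruct (R0_1_regular_off_center f x0 y0 Hf) as [rho [Hrho Hreg]].
  assert (Hregm : regular_off_center x0 y0 rho (fun x y => f x y ^ m))
    by (intros x y Hxy Hne; apply regular_at_pow, Hreg; assumption).
  destruct (vanishes_to_order_flat_on_box x0 y0 rho Hrho k m _ ltac:(lia) Hvan Hregm)
    as [HCk Hflat].
  exists (box x0 y0 rho); split; [apply box_open |].
  split; [exact (box_center x0 y0 rho Hrho) | split; assumption].
Qed.
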